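(* Let $G$ be a finite abelian group. Then $\daleth^*(G) = \emptyset$ if and only if $|G|\le 2$. If $|G| \ge 3$, then $\daleth^*(G)$ is a finite interval of integers with $\min \daleth^*(G) = 3$.
   Context: For an abelian group $G$, $\mathcal B(G)$ is the monoid of zero-sum sequences over $G$: finite unordered sequences (with repetition) of elements of $G$ whose sum is $0$, with concatenation as operation. Its atoms are the minimal zero-sum sequences. For $A\in\mathcal B(G)$, $\mathsf L(A)$ is the set of all $k$ such that $A$ is a product of $k$ atoms. $\daleth^*(G) := \{\min(\mathsf L(UV)\setminus\{2\}) : U,V \text{ atoms of } \mathcal B(G),\ |\mathsf L(UV)|>1\}$. *)

From mathcomp Require Import all_boot all_algebra.
Set Implicit Arguments. Unset Strict Implicit. Unset Printing Implicit Defensive.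
Import GRing.Theory.
Local Open Scope ring_scope.

(* A (finite, unordered) sequence over a finite abelian group G is encoded by
   its multiplicity function G -> nat (an element of the free abelian monoid F(G)). *)
Definition fseq (G : finZmodType) := {ffun G -> nat}.

Definition sigma (G : finZmodType) (S : fseq G) : G := \sum_(g : G) g *+ S g.

Definition seq_len (G : finZmodType) (S : fseq G) : nat := (\sum_(g : G) S g)%N.

Definition subseqF (G : finZmodType) (T S : fseq G) : Prop := forall g, (T g <= S g)%N.

Definition concat (G : finZmodType) (S T : fseq G) : fseq G := [ffun g => (S g + T g)%N].

Definition concat_list (G : finZmodType) (s : seq (fseq G)) : fseq G :=
  [ffun g => (\sum_(U <- s) U g)%N].

Definition zero_sum (G : finZmodType) (S : fseq G) : Prop := sigma S = 0.

Definition atom (G : finZmodType) (U : fseq G) : Prop :=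
  [/\ seq_len U <> 0%N, zero_sum U &
      forall T : fseq G, subseqF T U -> seq_len T <> 0%N -> zero_sum T -> T = U].

Definition lengths (G : finZmodType) (A : fseq G) (k : nat) : Prop :=
  exists s : seq (fseq G), [/\ size s = k, (forall U, U \in s -> atom U) & concat_list s = A].

Definition daleth_star (G : finZmodType) (n : nat) : Prop :=
  exists U V : fseq G, [/\ atom U, atom V,
    (exists k1 k2, k1 <> k2 /\ lengths (concat U V) k1 /\ lengths (concat U V) k2) &
    [/\ lengths (concat U V) n, n <> 2%N &
        forall k, lengths (concat U V) k -> k <> 2%N -> (n <= k)%N]].

(* If |G| <= 2 the atoms are 0 and a a, with a the nonzero element, so every
   factorization of A has (A(0) + |A|)/2 atoms and L(UV) is a singleton.
   If |G| >= 3 there are nonzero u, v with u + v nonzero, and U = u v (-u-v),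
   V = -U give min (L(UV) \ {2}) = 3, the least possible value. As atoms have
   bounded length, it remains to see that daleth*(G) is closed under
   n |-> n - 1 for n >= 4. Let n = min (L(UV) \ {2}). Replacing two terms v, w
   of V by v + w keeps V an atom and lowers each length of UV by at most one,
   while n stays a length when v, w lie in one atom of a factorization of
   length n. Repeating this shrinks |U| + |V| until either n - 1 becomes a
   length, and then the new minimum, or all atoms of the factorization are
   u (-u) with u in U; merging -u0 and -u1 then fuses two of them into the
   atom u0 u1 (-u0-u1), a factorization of length n - 1. *)

From mathcomp Require Import all_boot all_algebra.
From mathcomp Require Import fingroup cyclic.
From mathcomp Require Import zify.
From Stdlib Require Import Classical.
Set Implicit Arguments. Unset Strict Implicit. Unset Printing Implicit Defensive.
Import GRing.Theory.

Lemma interval_of_pred_closed (P : nat -> Prop) a M : P a ->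
  (forall n, P n -> a <= n <= M) -> (forall n, a < n -> P n -> P n.-1) ->
  exists b, a <= b /\ forall n, P n <-> a <= n <= b.
Proof.
move=> Pa PaM Ppred.
have [b [Pb bmax]] : exists b, P b /\ forall n, P n -> n <= b.
  elim: M PaM => [|M IH] PM; first by exists a; split => // n /PM; lia.
  case: (classic (P M.+1)) => [PM1|nPM1]; first by exists M.+1; split => // n /PM; lia.
  apply: IH => n Pn; have := PM n Pn.
  by case: (eqVneq n M.+1) => [en|]; [rewrite en in Pn | lia].
have ab : a <= b by have := PaM b Pb; lia.
have Pdown d : d <= b - a -> P (b - d).
  elim: d => [|d IH] d_le; first by rewrite subn0.
  have -> : b - d.+1 = (b - d).-1 by lia.
  by apply: Ppred; [lia | apply: IH; lia].
exists b; split => // n; split => [Pn|/andP [an nb]].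
  by have := PaM n Pn; have := bmax n Pn; lia.
have -> : n = b - (b - n) by lia.
by apply: Pdown; lia.
Qed.

Section ZeroSumSequences.
Variable G : finZmodType.
Implicit Types (S T U V W X Y A B R : fseq G) (s : seq (fseq G)) (a g u v w x : G).

(** * Sequences as multiplicity functions *)

Definition fseq0 : fseq G := [ffun _ => 0].
Definition fseq1 g : fseq G := [ffun x => nat_of_bool (x == g)].
Definition fseq2 v w : fseq G := concat (fseq1 v) (fseq1 w).
Definition fdiff S T : fseq G := [ffun x => S x - T x].

(* Pointwise goals are stated at type [fseq G]: [apply/ffunP] would produce
   [S x] in a syntactically different form, which [lia] treats as a new atom. *)
Lemma fseq_ext S T : (forall x, S x = T x) -> S = T.
Proof. by move=> eqST; apply/ffunP. Qed.

Lemma fseq_eq_at S T x : S = T -> S x = T x.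
Proof. by move->. Qed.

Lemma fseq0E x : fseq0 x = 0. Proof. by rewrite ffunE. Qed.
Lemma fseq1E g x : fseq1 g x = (x == g). Proof. by rewrite ffunE. Qed.
Lemma fseq2E v w x : fseq2 v w x = (x == v) + (x == w). Proof. by rewrite !ffunE. Qed.
Lemma fdiffE S T x : fdiff S T x = S x - T x. Proof. by rewrite ffunE. Qed.
Lemma concatE S T x : concat S T x = S x + T x. Proof. by rewrite ffunE. Qed.

Lemma concat_listE s x : concat_list s x = \sum_(U <- s) U x.
Proof. by rewrite ffunE. Qed.

Lemma concatC : commutative (@concat G).
Proof. by move=> S T; apply: fseq_ext => x; rewrite !concatE addnC. Qed.

Lemma concatI S T U : concat S T = concat S U -> T = U.
Proof.
by move=> E; apply: fseq_ext => x; have := fseq_eq_at x E; rewrite !concatE => /addnI.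
Qed.

Lemma concat_list_nil : concat_list [::] = fseq0.
Proof. by apply: fseq_ext => x; rewrite concat_listE big_nil fseq0E. Qed.

Lemma concat_list_cons U s : concat_list (U :: s) = concat U (concat_list s).
Proof. by apply: fseq_ext => x; rewrite concatE !concat_listE big_cons. Qed.

Lemma concat_list_cat s1 s2 :
  concat_list (s1 ++ s2) = concat (concat_list s1) (concat_list s2).
Proof. by apply: fseq_ext => x; rewrite concatE !concat_listE big_cat. Qed.

Lemma concat_list_perm s1 s2 : perm_eq s1 s2 -> concat_list s1 = concat_list s2.
Proof. by move=> P; apply: fseq_ext => x; rewrite !concat_listE (perm_big _ P). Qed.

Lemma concat_list_rem U s : U \in s -> concat_list s = concat U (concat_list (rem U s)).
Proof. by move=> /perm_to_rem/concat_list_perm->; rewrite concat_list_cons. Qed.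

Lemma concat_list_gt0 s x : 0 < concat_list s x -> exists2 U, U \in s & 0 < U x.
Proof.
rewrite concat_listE; elim: s => [|U s IH]; first by rewrite big_nil.
rewrite big_cons; case: (posnP (U x)) => [-> /IH [V Vs Vx]|Ux _].
  by exists V => //; rewrite inE Vs orbT.
by exists U; rewrite ?mem_head.
Qed.

Lemma concat_list_pairs (ps : seq (fseq G * fseq G)) :
  concat_list [seq concat p.1 p.2 | p <- ps] =
  concat (concat_list (map fst ps)) (concat_list (map snd ps)).
Proof.
apply: fseq_ext => x; rewrite concatE !concat_listE !big_map -big_split.
by apply: eq_bigr => p _; rewrite concatE.
Qed.

Lemma sigma_concat S T : sigma (concat S T) = (sigma S + sigma T)%R.
Proof. by rewrite /sigma -big_split; apply: eq_bigr => g _; rewrite concatE mulrnDr. Qed.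

Lemma seq_len_concat S T : seq_len (concat S T) = seq_len S + seq_len T.
Proof. by rewrite /seq_len -big_split; apply: eq_bigr => g _; rewrite concatE. Qed.

Lemma seq_len_concat_list s : seq_len (concat_list s) = \sum_(U <- s) seq_len U.
Proof.
by rewrite /seq_len exchange_big; apply: eq_bigr => x _; rewrite concat_listE.
Qed.

Lemma seq_len_fseq0 : seq_len fseq0 = 0.
Proof. by rewrite /seq_len big1 // => g _; rewrite fseq0E. Qed.

Lemma sigma_fseq1 g : sigma (fseq1 g) = g.
Proof.
rewrite /sigma (bigD1 g) //= big1 ?addr0 => [|x /negbTE nxg]; by rewrite fseq1E ?eqxx ?nxg.
Qed.

Lemma seq_len_fseq1 g : seq_len (fseq1 g) = 1.
Proof.
rewrite /seq_len (bigD1 g) //= big1 ?addn0 => [|x /negbTE nxg]; by rewrite fseq1E ?eqxx ?nxg.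
Qed.

Lemma sigma_fseq2 v w : sigma (fseq2 v w) = (v + w)%R.
Proof. by rewrite sigma_concat !sigma_fseq1. Qed.

Lemma seq_len_fseq2 v w : seq_len (fseq2 v w) = 2.
Proof. by rewrite seq_len_concat !seq_len_fseq1. Qed.

Lemma subseqF_trans T S R : subseqF T S -> subseqF S R -> subseqF T R.
Proof. by move=> TS SR x; apply: leq_trans (TS x) (SR x). Qed.

Lemma subseqF_concatl S T : subseqF S (concat S T).
Proof. by move=> x; rewrite concatE leq_addr. Qed.

Lemma subseqF_concatr S T : subseqF T (concat S T).
Proof. by move=> x; rewrite concatE leq_addl. Qed.

Lemma subseqF_concat_list U s : U \in s -> subseqF U (concat_list s).
Proof. by move=> /concat_list_rem->; apply: subseqF_concatl. Qed.

Lemma subseqF_fseq1 S g : 0 < S g -> subseqF (fseq1 g) S.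
Proof. by move=> Sg x; rewrite fseq1E; case: eqP => [->|]. Qed.

Lemma fdiffK S T : subseqF T S -> concat (fdiff S T) T = S.
Proof. by move=> TS; apply: fseq_ext => x; rewrite concatE fdiffE subnK. Qed.

Lemma sigma_fdiff S T : subseqF T S -> sigma (fdiff S T) = (sigma S - sigma T)%R.
Proof. by move=> /fdiffK {2}<-; rewrite sigma_concat addrK. Qed.

Lemma seq_len_fdiff S T : subseqF T S -> seq_len (fdiff S T) = seq_len S - seq_len T.
Proof. by move=> /fdiffK {2}<-; rewrite seq_len_concat addnK. Qed.

Lemma seq_len_eq0 S : seq_len S = 0 -> S = fseq0.
Proof.
move=> /eqP; rewrite sum_nat_eq0 => /forallP S0.
by apply: fseq_ext => x; rewrite fseq0E; apply/eqP/S0.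
Qed.

Lemma seq_len_gt0 S : seq_len S <> 0 -> exists g, 0 < S g.
Proof.
move=> S0; apply: NNPP => noS; apply/S0/eqP; rewrite sum_nat_eq0; apply/forallP => x.
by rewrite -leqn0 leqNgt; apply/negP => Sx; apply: noS; exists x.
Qed.

Lemma subseqF_seq_len T S : subseqF T S -> seq_len T <= seq_len S.
Proof. by move=> TS; apply: leq_sum => x _; apply: TS. Qed.

Lemma subseqF_seq_len_eq T S : subseqF T S -> seq_len T = seq_len S -> T = S.
Proof.
move=> TS eqTS; rewrite -(fdiffK TS); have := seq_len_fdiff TS; rewrite eqTS subnn.
by move=> /seq_len_eq0->; apply: fseq_ext => x; rewrite concatE fseq0E.
Qed.

Lemma seq_len_eq1 S : seq_len S = 1 -> exists g, S = fseq1 g.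
Proof.
move=> S1; have [g Sg] := seq_len_gt0 (S := S) ltac:(lia); exists g.
by symmetry; apply: subseqF_seq_len_eq; rewrite ?seq_len_fseq1 //; apply: subseqF_fseq1.
Qed.

Lemma seq_len_gt1 S : 1 < seq_len S -> exists v w, subseqF (fseq2 v w) S.
Proof.
move=> S2; have [v Sv] := seq_len_gt0 (S := S) ltac:(lia).
have Sv1 := subseqF_fseq1 Sv; have := seq_len_fdiff Sv1; rewrite seq_len_fseq1 => L.
have [w Sw] := seq_len_gt0 (S := fdiff S (fseq1 v)) ltac:(lia).
exists v, w; rewrite /fseq2 concatC -(fdiffK Sv1) => x.
by rewrite !concatE leq_add2r; apply: subseqF_fseq1.
Qed.

(** * Factorizations *)

Lemma concat_list_split s S T : concat_list s = concat S T ->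
  exists ps : seq (fseq G * fseq G),
    [/\ [seq concat p.1 p.2 | p <- ps] = s,
        concat_list (map fst ps) = S & concat_list (map snd ps) = T].
Proof.
elim: s S T => [|W s IH] S T E.
  exists [::]; split => //=; apply: fseq_ext => x; have := fseq_eq_at x E;
  by rewrite !ffunE big_nil; lia.
pose W1 : fseq G := [ffun x => minn (W x) (S x)].
have /IH [ps [Es ES ET]] : concat_list s = concat (fdiff S W1) (fdiff T (fdiff W W1)).
  apply: fseq_ext => x; have := fseq_eq_at x E.
  by rewrite concat_list_cons !concatE !fdiffE !ffunE; lia.
exists ((W1, fdiff W W1) :: ps); split => /=.
- by rewrite Es; congr (_ :: _); apply: fseq_ext => x; rewrite concatE !ffunE; lia.
- by rewrite concat_list_cons ES; apply: fseq_ext => x; have := fseq_eq_at x E;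
     rewrite concatE concat_list_cons !concatE !fdiffE !ffunE; lia.
- by rewrite concat_list_cons ET; apply: fseq_ext => x; have := fseq_eq_at x E;
     rewrite concatE concat_list_cons !concatE !fdiffE !ffunE; lia.
Qed.

Definition zero_sum_free S :=
  forall T, subseqF T S -> seq_len T <> 0 -> ~ zero_sum T.

Lemma zero_sum_seq_len1 S : zero_sum S -> seq_len S = 1 -> S = fseq1 0%R.
Proof. by move=> S0 /seq_len_eq1 [g Sg]; move: S0; rewrite /zero_sum Sg sigma_fseq1 => ->. Qed.

Lemma atom_min U T : atom U -> subseqF T U -> seq_len T <> 0 -> zero_sum T -> T = U.
Proof. by case=> _ _; apply. Qed.

Lemma atom_fseq1_0 U : atom U -> 0 < U 0%R -> U = fseq1 0%R.
Proof.
move=> Uat U0; symmetry; apply: atom_min; rewrite ?seq_len_fseq1 //.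
  exact: subseqF_fseq1.
by rewrite /zero_sum sigma_fseq1.
Qed.

(* In a zero-sum sequence of length at most 3, a proper nonempty zero-sum
   subsequence or its complement has length 1, hence is the sequence 0. *)
Lemma atom_of_seq_len_le3 S : zero_sum S -> S 0%R = 0 ->
  seq_len S <> 0 -> seq_len S <= 3 -> atom S.
Proof.
move=> S0 noS0 Sn0 S3; split => // R RS Rn0 R0; apply: NNPP => nRS.
have RSlt : seq_len R < seq_len S.
  by rewrite ltn_neqAle subseqF_seq_len // andbT; apply/eqP => /(subseqF_seq_len_eq RS).
have not_zero T : subseqF T S -> zero_sum T -> seq_len T <> 1.
  by move=> TS T0 /(zero_sum_seq_len1 T0) eT; have := TS 0%R; rewrite eT fseq1E eqxx noS0.
case: (eqVneq (seq_len R) 1) => [/(not_zero R RS R0)//|R1].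
apply: (not_zero (fdiff S R)).
- by move=> x; rewrite fdiffE leq_subr.
- by rewrite /zero_sum sigma_fdiff // S0 R0 subrr.
- by rewrite seq_len_fdiff //; lia.
Qed.

Lemma atom_zero_sum_free U T : atom U -> subseqF T U -> T <> U -> zero_sum_free T.
Proof.
move=> Uat TU nTU R RT Rn0 R0; apply: nTU.
have RU := subseqF_trans RT TU; have eRU := atom_min Uat RU Rn0 R0.
apply: subseqF_seq_len_eq => //; apply/eqP.
by rewrite eqn_leq subseqF_seq_len // -eRU subseqF_seq_len.
Qed.

Lemma lengths0 : lengths fseq0 0.
Proof. by exists [::]; rewrite concat_list_nil. Qed.

Lemma lengths_atom U : atom U -> lengths U 1.
Proof.
move=> Uat; exists [:: U]; split => //; first by move=> Y; rewrite inE => /eqP->.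
by apply: fseq_ext => x; rewrite concat_list_cons concat_list_nil concatE fseq0E addn0.
Qed.

Lemma lengths_concat A B k1 k2 :
  lengths A k1 -> lengths B k2 -> lengths (concat A B) (k1 + k2).
Proof.
move=> [s [<- sat <-]] [t [<- tat <-]]; exists (s ++ t).
split; [exact: size_cat | | exact: concat_list_cat].
by move=> Y; rewrite mem_cat => /orP[/sat|/tat].
Qed.

Lemma lengths_rem s X : (forall Y, Y \in s -> atom Y) -> X \in s ->
  lengths (concat_list (rem X s)) (size s).-1.
Proof. by move=> sat Xs; exists (rem X s); rewrite size_rem //; split=> // Y /mem_rem/sat. Qed.

Lemma lengths_gt0 A k : lengths A k -> seq_len A <> 0 -> 0 < k.
Proof. by move=> [[|U s] [<- _ <-]] //; rewrite concat_list_nil seq_len_fseq0. Qed.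

Lemma lengths_leq_seq_len A k : lengths A k -> k <= seq_len A.
Proof.
move=> [s [<- sat <-]]; rewrite seq_len_concat_list -sum1_size.
rewrite big_seq_cond [X in _ <= X]big_seq_cond.
by apply: leq_sum => U /andP[/sat [Un0 _ _] _]; lia.
Qed.

Lemma atom_lengths U k : atom U -> lengths U k -> k = 1.
Proof.
move=> Uat [[|Y t] [<- sat Es]].
  by case: Uat; rewrite -Es concat_list_nil seq_len_fseq0.
have [Yn0 Y0 _] := sat Y (mem_head _ _); rewrite concat_list_cons in Es.
have YU : Y = U by apply: atom_min => //; rewrite -Es; apply: subseqF_concatl.
have : lengths (concat_list t) (size t) by exists t; split=> // Z Zt; apply/sat/mem_behead.
move/lengths_leq_seq_len; have := congr1 (@seq_len G) Es.
by rewrite seq_len_concat YU /=; lia.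
Qed.

Lemma lengths_exists A : zero_sum A -> exists k, lengths A k.
Proof.
move: {2}(seq_len A) (leqnn (seq_len A)) => N; elim: N A => [|N IH] A AN A0.
  by exists 0; rewrite (@seq_len_eq0 A); [exact: lengths0 | lia].
case: (classic (seq_len A = 0)) => [/seq_len_eq0->|An0]; first by exists 0; apply: lengths0.
case: (classic (atom A)) => [Aat|nAat]; first by exists 1; apply: lengths_atom.
have [T [TA Tn0 T0 nTA]] : exists T, [/\ subseqF T A, seq_len T <> 0, zero_sum T & T <> A].
  apply: NNPP => noT; apply: nAat; split => // T TA Tn0 T0.
  by apply: NNPP => nTA; apply: noT; exists T.
have TAlt : seq_len T < seq_len A.
  by rewrite ltn_neqAle subseqF_seq_len // andbT; apply/eqP => /(subseqF_seq_len_eq TA).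
have [k1 kT] := IH T ltac:(lia) T0.
have [k2 kAT] : exists k, lengths (fdiff A T) k.
  by apply: IH; [rewrite seq_len_fdiff //; lia | rewrite /zero_sum sigma_fdiff // A0 T0 subrr].
by exists (k2 + k1); rewrite -(fdiffK TA); apply: lengths_concat.
Qed.

(* Every atom of a factorization of S R must meet R. *)
Lemma zero_sum_free_lengths S R k : zero_sum_free S ->
  lengths (concat S R) k -> k <= seq_len R.
Proof.
move=> Sfree [s [<- sat Es]]; have [ps [eps ES <-]] := concat_list_split Es; subst s.
rewrite size_map seq_len_concat_list big_map -sum1_size big_seq_cond [X in _ <= X]big_seq_cond.
apply: leq_sum => p /andP[pps _]; rewrite lt0n; apply/negP => /eqP/seq_len_eq0 p2.
have [pn0 p0 _] : atom (concat p.1 p.2) by apply: sat; apply: map_f.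
have p1S : subseqF p.1 S by rewrite -ES; apply: subseqF_concat_list; apply: map_f.
suff ep : concat p.1 p.2 = p.1 by apply: (Sfree p.1) => //; rewrite -ep.
by apply: fseq_ext => x; rewrite concatE p2 fseq0E addn0.
Qed.

(** * Merging two terms *)

Definition fmerge S v w : fseq G := concat (fdiff S (fseq2 v w)) (fseq1 (v + w)%R).
Definition funmerge S v w : fseq G := concat (fdiff S (fseq1 (v + w)%R)) (fseq2 v w).

Lemma fmergeE S v w x :
  fmerge S v w x = S x - ((x == v) + (x == w)) + (x == (v + w)%R).
Proof. by rewrite concatE fdiffE fseq2E fseq1E. Qed.

Lemma funmergeE S v w x :
  funmerge S v w x = S x - (x == (v + w)%R) + ((x == v) + (x == w)).
Proof. by rewrite concatE fdiffE fseq2E fseq1E. Qed.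

Section Merged.
Variables (v w : G).

Lemma sigma_fmerge S : subseqF (fseq2 v w) S -> sigma (fmerge S v w) = sigma S.
Proof. by move=> vwS; rewrite sigma_concat sigma_fdiff // sigma_fseq1 sigma_fseq2 subrK. Qed.

Lemma seq_len_fmerge S : subseqF (fseq2 v w) S -> seq_len (fmerge S v w) = (seq_len S).-1.
Proof.
move=> vwS; rewrite seq_len_concat seq_len_fdiff // seq_len_fseq1.
by have := subseqF_seq_len vwS; rewrite seq_len_fseq2; lia.
Qed.

Lemma sigma_funmerge S : subseqF (fseq1 (v + w)%R) S -> sigma (funmerge S v w) = sigma S.
Proof. by move=> cS; rewrite sigma_concat sigma_fdiff // sigma_fseq1 sigma_fseq2 subrK. Qed.

Lemma seq_len_funmerge S : subseqF (fseq1 (v + w)%R) S -> seq_len (funmerge S v w) = (seq_len S).+1.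
Proof.
move=> cS; rewrite seq_len_concat seq_len_fdiff // seq_len_fseq2.
by have := subseqF_seq_len cS; rewrite seq_len_fseq1; lia.
Qed.

Lemma funmergeK S : subseqF (fseq2 v w) S -> funmerge (fmerge S v w) v w = S.
Proof.
by move=> vwS; apply: fseq_ext => x; have := vwS x; rewrite funmergeE fmergeE fseq2E; lia.
Qed.

Lemma fmergeK S : subseqF (fseq1 (v + w)%R) S -> fmerge (funmerge S v w) v w = S.
Proof.
by move=> cS; apply: fseq_ext => x; have := cS x; rewrite fmergeE funmergeE fseq1E; lia.
Qed.

Lemma fmerge_concat S T : subseqF (fseq2 v w) S ->
  fmerge (concat S T) v w = concat (fmerge S v w) T.
Proof.
move=> vwS; apply: fseq_ext => x; have := vwS x.
by rewrite fseq2E (concatE (fmerge _ _ _)) !fmergeE concatE; lia.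
Qed.

Lemma funmerge_concat S T : subseqF (fseq1 (v + w)%R) S ->
  funmerge (concat S T) v w = concat (funmerge S v w) T.
Proof.
move=> cS; apply: fseq_ext => x; have := cS x.
by rewrite fseq1E (concatE (funmerge _ _ _)) !funmergeE concatE; lia.
Qed.

Lemma subseqF_funmerge T S : subseqF (fseq1 (v + w)%R) T -> subseqF T S ->
  subseqF (funmerge T v w) (funmerge S v w).
Proof. by move=> cT TS x; have := cT x; have := TS x; rewrite !funmergeE fseq1E; lia. Qed.

(* A zero-sum subsequence R of the merged atom either avoids the new term
   v + w, and then lies in the atom, or contains it, and then unmerging R
   gives a zero-sum subsequence of the atom. *)
Lemma fmerge_atom W : atom W -> subseqF (fseq2 v w) W -> atom (fmerge W v w).
Proof.
move=> Wat vwW; have W2 := subseqF_seq_len vwW; rewrite seq_len_fseq2 in W2.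
split; first by rewrite seq_len_fmerge //; lia.
  by rewrite /zero_sum sigma_fmerge //; case: Wat.
move=> R RW Rn0 R0; case: (leqP (R (v + w)%R) (fdiff W (fseq2 v w) (v + w)%R)) => [Rc|Rc].
  have RWd : subseqF R (fdiff W (fseq2 v w)).
    move=> x; case: (eqVneq x (v + w)%R) => [->//|nx].
    by have := RW x; rewrite fmergeE fdiffE fseq2E (negbTE nx) addn0.
  have eRW : R = W.
    by apply: atom_min => // x; apply: leq_trans (RWd x) _; rewrite fdiffE leq_subr.
  have := subseqF_seq_len RWd; rewrite seq_len_fdiff // seq_len_fseq2 eRW; lia.
have cR : subseqF (fseq1 (v + w)%R) R by apply: subseqF_fseq1; lia.
rewrite -(fmergeK cR); congr fmerge; apply: atom_min => //.
- by rewrite -(funmergeK vwW); apply: subseqF_funmerge.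
- by rewrite seq_len_funmerge.
- by rewrite /zero_sum sigma_funmerge.
Qed.

Lemma lengths_fmerge s X : (forall Y, Y \in s -> atom Y) -> X \in s ->
  subseqF (fseq2 v w) X -> lengths (fmerge (concat_list s) v w) (size s).
Proof.
move=> sat Xs vwX; rewrite (concat_list_rem Xs) fmerge_concat //.
have -> : size s = 1 + (size s).-1 by case: (s) Xs.
apply: lengths_concat (lengths_rem sat Xs).
by apply/lengths_atom/fmerge_atom => //; apply: sat.
Qed.

(* Unmerging the atom containing v + w yields an atom minus one term plus
   v and w, which splits into at most two atoms. *)
Lemma lengths_funmerge A k : subseqF (fseq2 v w) A ->
  lengths (fmerge A v w) k -> lengths A k \/ lengths A k.+1.
Proof.
move=> vwA [s [<- sat Es]].
have [X Xs Xc] : exists2 X, X \in s & 0 < X (v + w)%R.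
  by apply: concat_list_gt0; rewrite Es fmergeE eqxx; lia.
have Xat := sat X Xs; have cX := subseqF_fseq1 Xc.
have EA : A = concat (funmerge X v w) (concat_list (rem X s)).
  by rewrite -(funmergeK vwA) -Es (concat_list_rem Xs) funmerge_concat.
have [j Lj] : exists j, lengths (funmerge X v w) j.
  by apply: lengths_exists; rewrite /zero_sum sigma_funmerge //; case: Xat.
have j_gt0 : 0 < j by apply: lengths_gt0 Lj _; rewrite seq_len_funmerge.
have j_le2 : j <= 2.
  rewrite -(seq_len_fseq2 v w); apply: zero_sum_free_lengths Lj.
  apply: (atom_zero_sum_free Xat); first by move=> x; rewrite fdiffE leq_subr.
  move=> /(congr1 (@seq_len G)); rewrite seq_len_fdiff // seq_len_fseq1.
  by case: Xat; lia.
have := lengths_concat Lj (lengths_rem sat Xs); rewrite -EA.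
have -> : size s = (size s).-1.+1 by case: (s) Xs.
by case: j {Lj} j_gt0 j_le2 => [|[|[|]]] //= _ _; [left | right].
Qed.

End Merged.

(** * Downward closure *)

Definition lengths_lb_but2 A n := forall k, lengths A k -> k <> 2 -> n <= k.

Lemma lengths_atom_concat U V k : atom U -> atom V -> lengths (concat U V) k -> 2 <= k.
Proof.
move=> Uat Vat Lk; have k_gt0 : 0 < k.
  by apply: lengths_gt0 Lk _; rewrite seq_len_concat; case: Uat; lia.
case: k k_gt0 Lk => [|[|//]] // _ [s [s1 sat Es]].
case: s s1 sat Es => [|X [|//]] //= _ sat.
rewrite concat_list_cons concat_list_nil => EX.
have {}EX : X = concat U V.
  by rewrite -EX; apply: fseq_ext => x; rewrite concatE fseq0E addn0.
have Xat : atom X by apply: sat; rewrite mem_head.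
have UX : U = X.
  by case: Uat => Un0 U0 _; apply: atom_min => //; rewrite EX; apply: subseqF_concatl.
case: Vat => Vn0 _ _; have := congr1 (@seq_len G) EX; rewrite seq_len_concat -UX; lia.
Qed.

Lemma lengths_atom_concat2 U V : atom U -> atom V -> lengths (concat U V) 2.
Proof. by move=> Uat Vat; apply: (lengths_concat (k1 := 1) (k2 := 1)); apply: lengths_atom. Qed.

Lemma daleth_starE n : daleth_star G n <-> exists U V,
  [/\ atom U, atom V, lengths (concat U V) n, n <> 2 & lengths_lb_but2 (concat U V) n].
Proof.
split; first by move=> [U [V [Uat Vat _ [Ln n2 lb]]]]; exists U, V.
move=> [U [V [Uat Vat Ln n2 lb]]]; exists U, V; split => //.
by exists 2, n; do !split => //; [lia | apply: lengths_atom_concat2].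
Qed.

Lemma daleth_star_ge3 n : daleth_star G n -> 3 <= n.
Proof.
move=> /daleth_starE [U [V [Uat Vat Ln n2 _]]].
by have := lengths_atom_concat Uat Vat Ln; lia.
Qed.

Lemma lengths_lb_but2_fmerge U V v w n : atom U -> atom V -> subseqF (fseq2 v w) V ->
  lengths_lb_but2 (concat U V) n -> lengths_lb_but2 (concat U (fmerge V v w)) n.-1.
Proof.
move=> Uat Vat vwV lb k Lk k2.
have k_ge2 := lengths_atom_concat Uat (fmerge_atom Vat vwV) Lk.
have vwUV : subseqF (fseq2 v w) (concat U V) by apply: subseqF_trans vwV (subseqF_concatr _ _).
move: Lk; rewrite concatC -fmerge_concat // concatC => /(lengths_funmerge vwUV) [/lb|/lb].
  by move=> /(_ k2); lia.
by move=> /(_ ltac:(lia)); lia.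
Qed.

Lemma lengths_fseq1_0_concat V k : atom V -> lengths (concat (fseq1 0%R) V) k -> k = 2.
Proof.
move=> Vat [s [<- sat Es]].
have [X Xs X0] : exists2 X, X \in s & 0 < X 0%R.
  by apply: concat_list_gt0; rewrite Es concatE fseq1E eqxx.
have EX := atom_fseq1_0 (sat X Xs) X0.
have Lrem := lengths_rem sat Xs.
rewrite (concat_list_rem Xs) EX in Es; rewrite EX (concatI Es) in Lrem.
by have := atom_lengths Vat Lrem; case: (s) Xs => //= _ t _ ->.
Qed.

Lemma atom_concat_lengths_no0 U V n : atom U -> atom V ->
  lengths (concat U V) n -> n <> 2 -> U 0%R = 0.
Proof.
move=> Uat Vat Ln n2; case: (posnP (U 0%R)) => // U0; exfalso.
by rewrite (atom_fseq1_0 Uat U0) in Ln; apply/n2/(lengths_fseq1_0_concat Vat Ln).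
Qed.

Lemma daleth_star_pred_or_fmerge U V n s X v w :
  atom U -> atom V -> 4 <= n -> lengths_lb_but2 (concat U V) n ->
  (forall Y, Y \in s -> atom Y) -> size s = n -> concat_list s = concat U V ->
  X \in s -> subseqF (fseq2 v w) X -> subseqF (fseq2 v w) V ->
  daleth_star G n.-1 \/
  [/\ atom (fmerge V v w), lengths (concat U (fmerge V v w)) n
    & lengths_lb_but2 (concat U (fmerge V v w)) n].
Proof.
move=> Uat Vat n4 lb sat sn Es Xs vwX vwV.
have V'at := fmerge_atom Vat vwV.
have Ln : lengths (concat U (fmerge V v w)) n.
  by rewrite concatC -fmerge_concat // concatC -Es -sn; apply: lengths_fmerge vwX.
have lb' := lengths_lb_but2_fmerge Uat Vat vwV lb.
case: (classic (lengths (concat U (fmerge V v w)) n.-1)) => [Ln1|nLn1].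
  by left; apply/daleth_starE; exists U, (fmerge V v w); split => //; lia.
right; split => // k Lk k2; have := lb' k Lk k2.
by case: (eqVneq k n.-1) => [ek|]; [rewrite ek in Lk | lia].
Qed.

(* Merging v0, v1 in V turns the two atoms u0 v0, u1 v1 of a factorization
   of U V into the single atom u0 u1 (v0 + v1). *)
Lemma daleth_star_of_pairs U V R m (u0 v0 u1 v1 : G) :
  atom U -> atom V -> 2 <= m -> lengths_lb_but2 (concat U V) m.+2 -> U 0%R = 0 ->
  (u0 + v0 = 0)%R -> (u1 + v1 = 0)%R -> subseqF (fseq2 u0 u1) U -> seq_len U <> 2 ->
  subseqF (fseq2 v0 v1) V ->
  concat U V = concat (concat (fseq2 u0 v0) (fseq2 u1 v1)) R -> lengths R m ->
  daleth_star G m.+1.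
Proof.
move=> Uat Vat m2 lb U0 uv0 uv1 uU U2 vV EUV LR.
have u_neq0 x : subseqF (fseq1 x) U -> x != 0%R.
  by move=> xU; apply: contraTneq (xU 0%R) => ->; rewrite fseq1E eqxx U0.
have u0_neq0 : u0 != 0%R.
  by apply: u_neq0 => x; apply: leq_trans (uU x); rewrite fseq2E fseq1E leq_addr.
have u1_neq0 : u1 != 0%R.
  by apply: u_neq0 => x; apply: leq_trans (uU x); rewrite fseq2E fseq1E leq_addl.
have v01_neq0 : (v0 + v1)%R != 0%R.
  apply: contra_notN U2 => /eqP v01; rewrite -(atom_min Uat uU) ?seq_len_fseq2 //.
  have eu0 : u0 = (- v0)%R by apply/eqP; rewrite -addr_eq0 uv0.
  have eu1 : u1 = (- v1)%R by apply/eqP; rewrite -addr_eq0 uv1.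
  by rewrite /zero_sum sigma_fseq2 eu0 eu1 -opprD v01 oppr0.
have Zat : atom (concat (fseq2 u0 u1) (fseq1 (v0 + v1)%R)).
  apply: atom_of_seq_len_le3.
  - by rewrite /zero_sum sigma_concat sigma_fseq2 sigma_fseq1 addrACA uv0 uv1 addr0.
  - rewrite concatE fseq2E fseq1E !(eq_sym 0%R).
    by rewrite (negbTE u0_neq0) (negbTE u1_neq0) (negbTE v01_neq0).
  - by rewrite seq_len_concat seq_len_fseq2 seq_len_fseq1.
  - by rewrite seq_len_concat seq_len_fseq2 seq_len_fseq1.
have vP : subseqF (fseq2 v0 v1) (concat (fseq2 u0 v0) (fseq2 u1 v1)).
  by move=> x; rewrite concatE !fseq2E; lia.
have EZ : fmerge (concat (fseq2 u0 v0) (fseq2 u1 v1)) v0 v1 =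
          concat (fseq2 u0 u1) (fseq1 (v0 + v1)%R).
  apply: fseq_ext => x.
  by rewrite fmergeE (concatE (fseq2 u0 u1)) concatE !fseq2E fseq1E; lia.
apply/daleth_starE; exists U, (fmerge V v0 v1); split => //.
- exact: fmerge_atom.
- rewrite concatC -fmerge_concat // concatC EUV fmerge_concat // EZ.
  exact: (lengths_concat (k1 := 1) (lengths_atom Zat) LR).
- lia.
- exact: (lengths_lb_but2_fmerge Uat Vat vV lb).
Qed.

Lemma daleth_star_pred_of_singletons U V (ps : seq (fseq G * fseq G)) n :
  atom U -> atom V -> 4 <= n -> lengths_lb_but2 (concat U V) n -> U 0%R = 0 ->
  size ps = n -> (forall p, p \in ps -> atom (concat p.1 p.2)) ->
  (forall p, p \in ps -> seq_len p.1 = 1 /\ seq_len p.2 = 1) ->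
  concat_list (map fst ps) = U -> concat_list (map snd ps) = V -> daleth_star G n.-1.
Proof.
move=> Uat Vat n4 lb U0 sn pat p1 EU EV; subst n.
have LU : seq_len U = size ps.
  rewrite -EU seq_len_concat_list big_map -sum1_size big_seq [in RHS]big_seq.
  by apply: eq_bigr => p /p1 [].
case: ps pat p1 EU EV LU n4 lb => [|[X0 Y0] [|[X1 Y1] ps]] //= pat p1 EU EV LU n4 lb.
have in0 : (X0, Y0) \in (X0, Y0) :: (X1, Y1) :: ps by rewrite mem_head.
have in1 : (X1, Y1) \in (X0, Y0) :: (X1, Y1) :: ps by rewrite !inE eqxx orbT.
have /= [/seq_len_eq1 [u0 eX0] /seq_len_eq1 [v0 eY0]] := p1 _ in0.
have /= [/seq_len_eq1 [u1 eX1] /seq_len_eq1 [v1 eY1]] := p1 _ in1.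
subst X0 Y0 X1 Y1; rewrite !concat_list_cons in EU EV.
have pair_sum0 x y :
    (fseq1 x, fseq1 y) \in (fseq1 u0, fseq1 v0) :: (fseq1 u1, fseq1 v1) :: ps -> (x + y = 0)%R.
  by move=> /pat [_ + _]; rewrite /zero_sum sigma_concat !sigma_fseq1.
apply: (@daleth_star_of_pairs U V (concat_list [seq concat p.1 p.2 | p <- ps]) (size ps)
          u0 v0 u1 v1) => //; try lia.
- exact: pair_sum0 in0.
- exact: pair_sum0 in1.
- by rewrite -EU => x; rewrite fseq2E !concatE !fseq1E; lia.
- by rewrite -EV => x; rewrite fseq2E !concatE !fseq1E; lia.
- by rewrite -EU -EV; apply: fseq_ext => x; rewrite concat_list_pairs !concatE; lia.
- exists [seq concat p.1 p.2 | p <- ps]; rewrite size_map; split => // Y /mapP [p pps ->].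
  by apply: pat; rewrite !inE pps !orbT.
Qed.

(* Induction on |U| + |V|: merge two terms of U or of V lying in one atom of a
   shortest factorization; when no atom contains two terms of U or two of V,
   all atoms have the shape u (-u). *)
Lemma daleth_star_pred_aux n N U V : 4 <= n -> seq_len U + seq_len V <= N ->
  atom U -> atom V -> lengths (concat U V) n -> lengths_lb_but2 (concat U V) n ->
  daleth_star G n.-1.
Proof.
move=> n4; elim: N U V => [|N IH] U V UVN Uat Vat Ln lb; first by case: Uat; lia.
have U0 := atom_concat_lengths_no0 Uat Vat Ln ltac:(lia).
have V0 : V 0%R = 0 by apply: (atom_concat_lengths_no0 (n := n) Vat Uat); [rewrite concatC | lia].
have [s [sn sat Es]] := Ln; have [ps [eps EU EV]] := concat_list_split Es.
have ps_s p : p \in ps -> concat p.1 p.2 \in s by move=> pps; rewrite -eps; apply: map_f.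
case: (classic (exists2 p, p \in ps & 1 < seq_len p.2)) => [[p pps p2]|noV].
  have [v [w vwp]] := seq_len_gt1 p2.
  have vwV : subseqF (fseq2 v w) V.
    by apply: subseqF_trans vwp _; rewrite -EV; apply: subseqF_concat_list; apply: map_f.
  have := daleth_star_pred_or_fmerge Uat Vat n4 lb sat sn Es (ps_s p pps)
            (subseqF_trans vwp (subseqF_concatr _ _)) vwV.
  case=> [//|[V'at Ln' lb']]; apply: IH V'at Ln' lb' => //.
  by rewrite seq_len_fmerge //; have := subseqF_seq_len vwV; rewrite seq_len_fseq2; lia.
case: (classic (exists2 p, p \in ps & 1 < seq_len p.1)) => [[p pps p1]|noU].
  have [v [w vwp]] := seq_len_gt1 p1.
  have vwU : subseqF (fseq2 v w) U.
    by apply: subseqF_trans vwp _; rewrite -EU; apply: subseqF_concat_list; apply: map_f.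
  rewrite concatC in Es lb.
  have := daleth_star_pred_or_fmerge Vat Uat n4 lb sat sn Es (ps_s p pps)
            (subseqF_trans vwp (subseqF_concatl _ _)) vwU.
  case=> [//|[U'at Ln' lb']]; rewrite concatC in Ln' lb'; apply: IH U'at Vat Ln' lb'.
  by rewrite seq_len_fmerge //; have := subseqF_seq_len vwU; rewrite seq_len_fseq2; lia.
apply: (daleth_star_pred_of_singletons Uat Vat n4 lb U0 _ _ _ EU EV).
- by rewrite -sn -eps size_map.
- by move=> p /ps_s /sat.
move=> p pps; have [pn0 p0 _] := sat _ (ps_s p pps).
have p_no0 : concat p.1 p.2 0%R = 0.
  by have := subseqF_concat_list (ps_s p pps) 0%R; rewrite Es !concatE U0 V0; lia.
have p_neq1 : seq_len (concat p.1 p.2) <> 1.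
  by move=> /(zero_sum_seq_len1 p0) ep; move: p_no0; rewrite ep fseq1E eqxx.
have p1_le1 : seq_len p.1 <= 1 by rewrite leqNgt; apply/negP => p1; apply: noU; exists p.
have p2_le1 : seq_len p.2 <= 1 by rewrite leqNgt; apply/negP => p2; apply: noV; exists p.
by move: pn0 p_neq1; rewrite seq_len_concat; lia.
Qed.

Lemma daleth_star_pred n : 4 <= n -> daleth_star G n -> daleth_star G n.-1.
Proof.
move=> n4 /daleth_starE [U [V [Uat Vat Ln _ lb]]].
exact: (daleth_star_pred_aux n4 (leqnn _) Uat Vat Ln lb).
Qed.

(** * Dependence on the order of G *)

Lemma atom_count_le_card U g : atom U -> U g <= #|G|.
Proof.
move=> Uat; rewrite leqNgt; apply/negP => Ug.
pose T : fseq G := [ffun x => (x == g) * #|G|].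
have Tg : T g = #|G| by rewrite ffunE eqxx mul1n.
have TU : subseqF T U by move=> x; rewrite ffunE; case: eqP => [->|_]; lia.
have Tg_gt0 : 0 < T g by rewrite Tg; apply/card_gt0P; exists g.
have Tn0 : seq_len T <> 0.
  by have := subseqF_seq_len (subseqF_fseq1 Tg_gt0); rewrite seq_len_fseq1; lia.
have T0 : zero_sum T.
  rewrite /zero_sum /sigma (bigD1 g) //= big1 => [|x /negbTE nxg]; last by rewrite ffunE nxg mul0n.
  by rewrite Tg addr0; have := expg_cardG (in_setT g); rewrite cardsT.
by have := fseq_eq_at g (atom_min Uat TU Tn0 T0); rewrite Tg; lia.
Qed.

Lemma seq_len_atom_le U : atom U -> seq_len U <= #|G| * #|G|.
Proof.
move=> Uat; rewrite -sum_nat_const.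
by apply: leq_sum => g _; apply: atom_count_le_card.
Qed.

Lemma daleth_star_le n : daleth_star G n -> n <= 2 * (#|G| * #|G|).
Proof.
move=> /daleth_starE [U [V [Uat Vat Ln _ _]]]; have := lengths_leq_seq_len Ln.
by rewrite seq_len_concat; have := seq_len_atom_le Uat; have := seq_len_atom_le Vat; lia.
Qed.

Lemma card_le2_nonzero_eq a x : #|G| <= 2 -> a != 0%R -> x != 0%R -> x = a.
Proof.
move=> G2 a0 x0; apply/eqP; apply: contraTT G2 => xa; rewrite -ltnNge.
by apply/card_gt2P; exists 0%R, a, x; split; [|rewrite eq_sym a0 eq_sym xa x0].
Qed.

Lemma addrr_card_le2 a : #|G| <= 2 -> (a + a = 0)%R.
Proof.
move=> G2; case: (eqVneq a 0%R) => [->|a0]; first by rewrite addr0.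
case: (eqVneq (a + a)%R 0%R) => // aa0.
have /addrI a_eq0 : (a + a = a + 0)%R by rewrite addr0; apply: card_le2_nonzero_eq.
by rewrite a_eq0 eqxx in a0.
Qed.

(* The atoms are 0 and a a, where a is the nonzero element. *)
Lemma atom_card_le2 W : #|G| <= 2 -> atom W -> W 0%R + seq_len W = 2.
Proof.
move=> G2 Wat; case: (posnP (W 0%R)) => [W0|W0]; last first.
  by rewrite (atom_fseq1_0 Wat W0) seq_len_fseq1 fseq1E eqxx.
have [a Wa] : exists a, 0 < W a by apply: seq_len_gt0; case: Wat.
have a0 : a != 0%R by apply: contraTneq Wa => ->; rewrite W0.
have W_supp x : x != a -> W x = 0.
  move=> xa; case: (eqVneq x 0%R) => [->//|x0].
  by move: xa; rewrite (card_le2_nonzero_eq G2 a0 x0) eqxx.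
have LW : seq_len W = W a.
  rewrite /seq_len (bigD1 a) //= big1 ?addn0 // => x /W_supp.
have Wa2 : 1 < W a.
  rewrite -LW ltn_neqAle eq_sym; apply/andP; split; last by case: Wat; lia.
  have [_ Wsum0 _] := Wat; apply/eqP => /(zero_sum_seq_len1 Wsum0) eW.
  by move: W0; rewrite eW fseq1E eqxx.
have aaW : subseqF (fseq2 a a) W.
  by move=> x; rewrite fseq2E; case: (eqVneq x a) => [->|/W_supp->]; lia.
rewrite -(atom_min Wat aaW) ?seq_len_fseq2 ?fseq2E ?(eq_sym 0%R) ?(negbTE a0) //.
by rewrite /zero_sum sigma_fseq2 addrr_card_le2.
Qed.

Lemma lengths_card_le2 A k : #|G| <= 2 -> lengths A k -> A 0%R + seq_len A = 2 * k.
Proof.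
move=> G2 [s [<- sat <-]]; elim: s sat => [|W s IH] sat.
  by rewrite concat_list_nil fseq0E seq_len_fseq0.
rewrite concat_list_cons concatE seq_len_concat.
have := atom_card_le2 G2 (sat W (mem_head _ _)).
by have := IH (fun Y Ys => sat Y (mem_behead (s := W :: s) Ys)); rewrite /=; lia.
Qed.

Lemma daleth_star_card_le2 n : #|G| <= 2 -> ~ daleth_star G n.
Proof.
move=> G2 [U [V [_ _ [k1 [k2 [k12 [L1 L2]]]] _]]]; apply: k12.
by have := lengths_card_le2 G2 L1; have := lengths_card_le2 G2 L2; lia.
Qed.

Lemma card_gt2_nonzero_pair : 2 < #|G| ->
  exists u v, [/\ u != 0%R, v != 0%R & (u + v)%R != 0%R].
Proof.
move=> G3; have : 1 < #|[set~ (0 : G)%R]| by rewrite cardsC1 -ltnS (ltn_predK G3).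
move=> /card_gt1P [u [v [+ + uv]]]; rewrite !in_setC1 => u0 v0.
case: (eqVneq (u + v)%R 0%R) => [uv0|]; last by exists u, v.
exists u, u; split => //; apply: contra_neq uv => uu0.
by apply: (@addrI _ u); rewrite uu0 uv0.
Qed.

Lemma daleth_star3 u v : u != 0%R -> v != 0%R -> (u + v)%R != 0%R -> daleth_star G 3.
Proof.
move=> u0 v0 uv0.
have opp_neq0 x : x != 0%R -> (- x)%R != 0%R by rewrite oppr_eq0.
have nz x : x != 0%R -> (0%R == x) = false by rewrite eq_sym => /negbTE.
have pair_atom x : x != 0%R -> atom (fseq2 x (- x)%R).
  move=> x0; apply: atom_of_seq_len_le3; rewrite ?seq_len_fseq2 //.
  - by rewrite /zero_sum sigma_fseq2 subrr.
  - by rewrite fseq2E !nz ?opp_neq0.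
pose U := concat (fseq2 u v) (fseq1 (- (u + v))%R).
pose V := concat (fseq2 (- u)%R (- v)%R) (fseq1 (u + v)%R).
have Uat : atom U.
  apply: atom_of_seq_len_le3; rewrite ?seq_len_concat ?seq_len_fseq2 ?seq_len_fseq1 //.
  - by rewrite /zero_sum sigma_concat sigma_fseq2 sigma_fseq1 subrr.
  - by rewrite concatE fseq2E fseq1E !nz ?opp_neq0.
have Vat : atom V.
  apply: atom_of_seq_len_le3; rewrite ?seq_len_concat ?seq_len_fseq2 ?seq_len_fseq1 //.
  - by rewrite /zero_sum sigma_concat sigma_fseq2 sigma_fseq1 -opprD addNr.
  - by rewrite concatE fseq2E fseq1E !nz ?opp_neq0.
apply/daleth_starE; exists U, V; split => //.
- exists [:: fseq2 u (- u)%R; fseq2 v (- v)%R; fseq2 (u + v)%R (- (u + v))%R]; split => //.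
    by move=> Y; rewrite !inE => /or3P[] /eqP->; apply: pair_atom.
  apply: fseq_ext => x; rewrite !concat_list_cons concat_list_nil !concatE fseq0E.
  by rewrite !fseq1E; lia.
- by move=> k Lk k2; have := lengths_atom_concat Uat Vat Lk; lia.
Qed.

End ZeroSumSequences.

Theorem proposition3p3 (G : finZmodType) :
  ((forall n, ~ daleth_star G n) <-> (#|G| <= 2)%N) /\
  ((3 <= #|G|)%N ->
     exists b : nat, (3 <= b)%N /\
       forall n : nat, daleth_star G n <-> (3 <= n <= b)%N).
Proof.
have daleth3 : 2 < #|G| -> daleth_star G 3.
  by move=> /card_gt2_nonzero_pair [u [v [u0 v0 uv0]]]; apply: daleth_star3 u0 v0 uv0.
split.
  split => [noD|G2 n]; last exact: daleth_star_card_le2.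
  by rewrite leqNgt; apply/negP => /daleth3 /noD.
move=> G3; apply: (interval_of_pred_closed (M := 2 * (#|G| * #|G|)) (daleth3 G3)).
- by move=> n Dn; rewrite (daleth_star_ge3 Dn) (daleth_star_le Dn).
- by move=> n n4; apply: daleth_star_pred.
Qed.
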